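(* Let $A$ be a vector space with bilinear operations $\star,[-,-]$, and $x\cdot y=x\star y+y\star x$. (1) If $(A,\cdot,[-,-])$ is a transposed Poisson algebra, $(A,\star)$ is anti-Zinbiel, and $(-\mathcal{L}_{\star},\mathrm{ad},A)$ is a representation of the transposed Poisson algebra $(A,\cdot,[-,-])$, then $(A,\star,[-,-])$ is a TALO algebra, i.e. $x\star[y,z]=[x,y]\star z=[x,y\star z]=0$ for all $x,y,z$. (2) Conversely, if $(A,\star,[-,-])$ is a TALO algebra, then $(A,\cdot,[-,-])$ is a transposed Poisson algebra with representation $(-\mathcal{L}_{\star},\mathrm{ad},A)$.
   Context: Finite-dimensional spaces, characteristic zero. $\mathcal{L}_\star(x)y=x\star y$, $\mathrm{ad}(x)y=[x,y]$. Anti-Zinbiel: $x\star(y\star z)=-(x\star y+y\star x)\star z=x\star(z\star y)$. Transposed Poisson algebra: $(A,\cdot)$ commutative associative, $(A,[-,-])$ Lie, $2z\cdot[x,y]=[z\cdot x,y]+[x,z\cdot y]$. A representation of a transposed Poisson algebra is $(\mu,\rho,V)$ with $\mu(x\cdot y)=\mu(x)\mu(y)$, $\rho([x,y])=[\rho(x),\rho(y)]$, $2\mu(x)\rho(y)=\rho(x\cdot y)+\rho(y)\mu(x)$, $2\mu([x,y])=\rho(x)\mu(y)-\rho(y)\mu(x)$. A TALO algebra is $(A,\star,[-,-])$ with $(A,\star)$ anti-Zinbiel, $(A,[-,-])$ Lie, and $x\star[y,z]=[x,y]\star z=[x,y\star z]=0$ for all $x,y,z$. *)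

From HB Require Import structures.
From mathcomp Require Import all_boot all_order all_algebra.
Set Implicit Arguments. Unset Strict Implicit. Unset Printing Implicit Defensive.
Import GRing.Theory.
Local Open Scope ring_scope.

Section Defs.
Variables (F : fieldType) (A : lmodType F).

Definition bilinear_op (m : A -> A -> A) :=
  (forall (a : F) x y z, m (a *: x + y) z = a *: m x z + m y z) /\
  (forall (a : F) x y z, m z (a *: x + y) = a *: m z x + m z y).

Definition comm_assoc (m : A -> A -> A) :=
  (forall x y, m x y = m y x) /\ (forall x y z, m x (m y z) = m (m x y) z).

Definition lie_op (b : A -> A -> A) :=
  (forall x, b x x = 0) /\
  (forall x y z, b x (b y z) + b y (b z x) + b z (b x y) = 0).

Definition transposed_poisson (m b : A -> A -> A) :=
  [/\ comm_assoc m, lie_op b &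
      forall x y z, (m z (b x y)) *+ 2 = b (m z x) y + b x (m z y)].

Definition anti_zinbiel (s : A -> A -> A) :=
  forall x y z, s x (s y z) = - s (s x y + s y x) z /\
                s x (s y z) = s x (s z y).

Definition tp_representation (m b : A -> A -> A) (V : lmodType F)
  (mu rho : A -> V -> V) :=
  [/\ (forall x, linear (mu x)) /\ (forall x, linear (rho x)),
      (forall (a : F) x y v, mu (a *: x + y) v = a *: mu x v + mu y v) /\
      (forall (a : F) x y v, rho (a *: x + y) v = a *: rho x v + rho y v),
      forall x y v, mu (m x y) v = mu x (mu y v),
      forall x y v, rho (b x y) v = rho x (rho y v) - rho y (rho x v) &
      (forall x y v, (mu x (rho y v)) *+ 2 = rho (m x y) v + rho y (mu x v)) /\
      (forall x y v, (mu (b x y) v) *+ 2 = rho x (mu y v) - rho y (mu x v))].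

Definition TALO (s b : A -> A -> A) :=
  [/\ anti_zinbiel s, lie_op b &
      forall x y z, [/\ s x (b y z) = 0, s (b x y) z = 0 & b x (s y z) = 0]].

End Defs.

From HB Require Import structures.
From mathcomp Require Import all_boot all_order all_algebra.
Import GRing.Theory.
Local Open Scope ring_scope.

(* For (1), the three compatibility identities of the representation, written
   for the same triple, combine linearly into [x*z, y] + 2 [z*x, y] = 0; with
   x and z swapped this gives 3 [x*z, y] = 0, so [A*A, A] = 0 in characteristic
   zero, and the remaining identities then force A*[A,A] = [A,A]*A = 0.
   For (2), the anti-Zinbiel identities make x*(y*z) invariant under all
   permutations of x, y, z, which yields associativity of x.y; every identity
   mixing * and [-,-] has all its terms equal to zero. *)

Section Bilinear.
Context {F : fieldType} {A : lmodType F} {m : A -> A -> A}.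
Hypothesis Hm : bilinear_op m.

Lemma bilinear_opDl x y z : m (x + y) z = m x z + m y z.
Proof. by rewrite -[x]scale1r Hm.1 !scale1r. Qed.

Lemma bilinear_opDr x y z : m z (x + y) = m z x + m z y.
Proof. by rewrite -[x]scale1r Hm.2 !scale1r. Qed.

Lemma bilinear_op0r z : m z 0 = 0.
Proof. by apply: (addIr (m z 0)); rewrite add0r -bilinear_opDr addr0. Qed.

Lemma bilinear_opNr x z : m z (- x) = - m z x.
Proof. by rewrite -[- x]addr0 -scaleN1r Hm.2 bilinear_op0r addr0 scaleN1r. Qed.

Hypothesis Hlie : lie_op m.

Lemma lie_op_anti x y : m x y = - m y x.
Proof.
apply/eqP; rewrite -addr_eq0; apply/eqP.
by have := Hlie.1 (x + y); rewrite bilinear_opDl !bilinear_opDr !Hlie.1 add0r addr0.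
Qed.

Lemma lie_op_ad_morph x y v : m (m x y) v = m x (m y v) - m y (m x v).
Proof.
rewrite -bilinear_opNr -(lie_op_anti v x) (lie_op_anti (m x y)).
by apply/eqP; rewrite eq_sym -subr_eq0 opprK; apply/eqP; apply: Hlie.2.
Qed.

End Bilinear.

Lemma pchar0_natmul_eq0 {F : fieldType} {A : lmodType F} n (v : A) :
  [pchar F] =i pred0 -> (0 < n)%N -> v *+ n = 0 -> v = 0.
Proof.
move=> /pcharf0P charF0; case: n => // n _; rewrite -scaler_nat => /eqP.
by rewrite scaler_eq0 charF0 /= => /eqP.
Qed.

Definition sym_op {F : fieldType} {A : lmodType F} (s : A -> A -> A) x y :=
  s x y + s y x.

Section TALOOfRepresentation.
Context {F : fieldType} {A : lmodType F} {star br : A -> A -> A}.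
Hypotheses (charF0 : [pchar F] =i pred0) (Hbr : bilinear_op br) (Hlie : lie_op br).
Hypothesis tp_compat : forall x y z,
  (sym_op star z (br x y)) *+ 2 = br (sym_op star z x) y + br x (sym_op star z y).
Hypothesis rep_compat_mu_rho : forall x y v,
  (- star x (br y v)) *+ 2 = br (sym_op star x y) v + br y (- star x v).
Hypothesis rep_compat_mu_br : forall x y v,
  (- star (br x y) v) *+ 2 = br x (- star y v) - br y (- star x v).

Lemma br_star_relation x y z : br (star x z) y + br (star z x) y *+ 2 = 0.
Proof.
set P := br (star x z) y; set Q := br (star z x) y.
have mu_rho : star z (br x y) *+ 2 = br x (star z y) - (Q + P).
  apply: oppr_inj; rewrite -mulNrn rep_compat_mu_rho opprB /sym_op.
  by rewrite (bilinear_opDl Hbr) (bilinear_opNr Hbr).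
have mu_br : star (br x y) z *+ 2 = br x (star y z) + P.
  apply: oppr_inj; rewrite -mulNrn rep_compat_mu_br !(bilinear_opNr Hbr) opprK.
  by rewrite /P (lie_op_anti Hbr Hlie (star x z) y) opprD opprK.
have := tp_compat x y z.
rewrite /sym_op mulrnDl mu_rho mu_br (bilinear_opDl Hbr) (bilinear_opDr Hbr).
rewrite opprD addrACA addrNK [RHS]addrC => /addrI QP.
by rewrite mulr2n addrCA [P + Q]addrC -QP subrr.
Qed.

Lemma br_star_l_eq0 u v y : br (star u v) y = 0.
Proof.
set P := br (star u v) y.
have /eqP := br_star_relation v y u; rewrite addr_eq0 => /eqP Q_eq.
have := br_star_relation u y v; rewrite Q_eq mulNrn -mulrnA => /eqP.
rewrite subr_eq0 => /eqP P_eq.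
apply: (pchar0_natmul_eq0 3 _ charF0) => //.
by apply: (addIr P); rewrite add0r -mulrSr; apply/esym: P_eq.
Qed.

Lemma br_star_r_eq0 y u v : br y (star u v) = 0.
Proof. by rewrite (lie_op_anti Hbr Hlie) br_star_l_eq0 oppr0. Qed.

Lemma star_br_r_eq0 x y v : star x (br y v) = 0.
Proof.
apply/eqP; rewrite -oppr_eq0; apply/eqP.
apply: (pchar0_natmul_eq0 2 _ charF0) => //.
by rewrite rep_compat_mu_rho (bilinear_opDl Hbr) !br_star_l_eq0 (bilinear_opNr Hbr)
  br_star_r_eq0 oppr0 !addr0.
Qed.

Lemma star_br_l_eq0 x y v : star (br x y) v = 0.
Proof.
apply/eqP; rewrite -oppr_eq0; apply/eqP.
apply: (pchar0_natmul_eq0 2 _ charF0) => //.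
by rewrite rep_compat_mu_br !(bilinear_opNr Hbr) !br_star_r_eq0 oppr0 subr0.
Qed.

Lemma TALO_of_tp_representation : anti_zinbiel star -> TALO star br.
Proof.
move=> AZ; split=> // x y z.
by rewrite star_br_r_eq0 star_br_l_eq0 br_star_r_eq0.
Qed.

End TALOOfRepresentation.

Section AntiZinbiel.
Context {F : fieldType} {A : lmodType F} {star : A -> A -> A}.
Hypotheses (Hstar : bilinear_op star) (AZ : anti_zinbiel star).

Lemma anti_zinbiel_swapr x y z : star x (star y z) = star x (star z y).
Proof. exact: (AZ x y z).2. Qed.

Lemma anti_zinbiel_swapl x y z : star x (star y z) = star y (star x z).
Proof. by rewrite (AZ x y z).1 (AZ y x z).1 addrC. Qed.

Lemma anti_zinbiel_sym_opl x y z : star (sym_op star x y) z = - star x (star y z).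
Proof. by rewrite (AZ x y z).1 opprK. Qed.

Lemma anti_zinbiel_comm_assoc : comm_assoc (sym_op star).
Proof.
split=> [x y | x y z]; first by rewrite /sym_op addrC.
set t := star x (star y z).
have xzy : star x (star z y) = t by rewrite -anti_zinbiel_swapr.
have yzx : star y (star z x) = t by rewrite anti_zinbiel_swapr -anti_zinbiel_swapl.
have zxy : star z (star x y) = t by rewrite anti_zinbiel_swapl anti_zinbiel_swapr.
have zyx : star z (star y x) = t.
  by rewrite anti_zinbiel_swapl anti_zinbiel_swapr anti_zinbiel_swapl.
rewrite {1 3}/sym_op !anti_zinbiel_sym_opl /sym_op !(bilinear_opDr Hstar).
rewrite xzy yzx zxy zyx.
by rewrite addrK addKr.
Qed.

End AntiZinbiel.

Section RepresentationOfTALO.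
Context {F : fieldType} {A : lmodType F} {star br : A -> A -> A}.
Hypotheses (Hstar : bilinear_op star) (Hbr : bilinear_op br).
Hypothesis HT : TALO star br.

Let AZ : anti_zinbiel star. Proof. by case: HT. Qed.
Let Hlie : lie_op br. Proof. by case: HT. Qed.

Lemma TALO_star_brr x y z : star x (br y z) = 0.
Proof. by case: HT => _ _ /(_ x y z) []. Qed.

Lemma TALO_star_brl x y z : star (br x y) z = 0.
Proof. by case: HT => _ _ /(_ x y z) []. Qed.

Lemma TALO_br_starr x y z : br x (star y z) = 0.
Proof. by case: HT => _ _ /(_ x y z) []. Qed.

Lemma TALO_br_starl x y z : br (star x y) z = 0.
Proof. by rewrite (lie_op_anti Hbr Hlie) TALO_br_starr oppr0. Qed.

Lemma TALO_br_sym_opl x y z : br (sym_op star x y) z = 0.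
Proof. by rewrite (bilinear_opDl Hbr) !TALO_br_starl addr0. Qed.

Lemma TALO_br_sym_opr x y z : br z (sym_op star x y) = 0.
Proof. by rewrite (bilinear_opDr Hbr) !TALO_br_starr addr0. Qed.

Lemma TALO_transposed_poisson : transposed_poisson (sym_op star) br.
Proof.
split=> [||x y z]; [exact: anti_zinbiel_comm_assoc | exact: Hlie |].
by rewrite TALO_br_sym_opl TALO_br_sym_opr /sym_op TALO_star_brr TALO_star_brl
  addr0 mul0rn.
Qed.

Lemma TALO_tp_representation :
  tp_representation (sym_op star) br (fun x v => - star x v) br.
Proof.
split.
- split=> x a u v; first by rewrite Hstar.2 opprD scalerN.
  exact: Hbr.2.
- split=> a x y v; first by rewrite Hstar.1 opprD scalerN.
  exact: Hbr.1.
- by move=> x y v; rewrite (bilinear_opNr Hstar) (anti_zinbiel_sym_opl AZ) !opprK.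
- exact: lie_op_ad_morph.
- split=> x y v.
  + by rewrite TALO_star_brr oppr0 mul0rn TALO_br_sym_opl (bilinear_opNr Hbr)
      TALO_br_starr oppr0 addr0.
  + by rewrite TALO_star_brl oppr0 mul0rn !(bilinear_opNr Hbr) !TALO_br_starr
      oppr0 subr0.
Qed.

End RepresentationOfTALO.

Theorem mainTheorem13 (F : fieldType) (charF0 : [pchar F] =i pred0)
  (A : vectType F) (star br : A -> A -> A)
  (Hstar : bilinear_op star) (Hbr : bilinear_op br) :
  let dot := fun x y => star x y + star y x in
  ((transposed_poisson dot br /\ anti_zinbiel star /\
    tp_representation dot br (fun x v => - star x v) (fun x v => br x v)) ->
   TALO star br) /\
  (TALO star br ->
   transposed_poisson dot br /\
   tp_representation dot br (fun x v => - star x v) (fun x v => br x v)).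
Proof.
move=> dot; split.
  move=> [[_ Hlie tp_compat] [AZ [_ _ _ _ [rep_mu_rho rep_mu_br]]]].
  exact: (TALO_of_tp_representation charF0 Hbr Hlie tp_compat rep_mu_rho rep_mu_br AZ).
move=> HT; split; first exact: TALO_transposed_poisson.
exact: TALO_tp_representation.
Qed.
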